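(* Let $\mathcal{Q}$ be the exponential family of Gaussian distributions on $\mathbb{R}^d$ with diagonal covariance $\operatorname{diag}(\sigma^2)$, $\sigma^2\in\mathbb{R}^d_{>0}$, with expectation parameter $\omega=(\mu,\sigma^2+\mu\bullet\mu)$, and let $C=\{(\mu,\sigma^2+\mu\bullet\mu)\in\mathbb{R}^d\times\mathbb{R}^d:\mu\in\mathbb{R}^d_{\ge0}\}$. For $\omega=(\mu,\sigma^2+\mu\bullet\mu)$ with $\sigma^2\in\mathbb{R}^d_{>0}$, $\mathrm{proj}^{A^*}_C(\omega)=(\mu_P,\sigma^2+\mu_P\bullet\mu_P)$ where $(\mu_P)_i=\max(0,\mu_i)$ for $i=1,\dots,d$.
   Context: $\bullet$ denotes the entrywise (Hadamard) product. This family is an exponential family with sufficient statistic $\Gamma(x)=(x,x\bullet x)$, natural parameter $\theta=(\mu/\sigma^2,-\frac{1}{2\sigma^2})$ (entrywise), log-partition $A(\theta)=-\frac14\sum_i(\theta_1)_i^2/(\theta_2)_i-\frac12\sum_i\log(-2(\theta_2)_i)$, and expectation parameter $\omega=\nabla A(\theta)=(\mu,\sigma^2+\mu\bullet\mu)$; $A^*$ is the convex conjugate of $A$. $\mathrm{proj}^{A^*}_C(\omega)=\arg\min_{\omega'\in C}\{A^*(\omega')-A^*(\omega)-\langle\nabla A^*(\omega),\omega'-\omega\rangle\}$. *)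

From HB Require Import structures.
From mathcomp Require Import all_boot all_order all_algebra.
From mathcomp Require Import all_classical all_reals all_analysis.
Set Implicit Arguments. Unset Strict Implicit. Unset Printing Implicit Defensive.
Import Order.TTheory GRing.Theory Num.Theory.
Import numFieldNormedType.Exports.
Local Open Scope classical_set_scope.
Local Open Scope ring_scope.

Section Gauss.
Variables (R : realType) (d : nat).

Definition hadamard (x y : 'rV[R]_d) : 'rV[R]_d := \row_i (x 0 i * y 0 i).

Definition pinner (a b : 'rV[R]_d * 'rV[R]_d) : R :=
  \sum_(i < d) (a.1 0 i * b.1 0 i + a.2 0 i * b.2 0 i).

Definition natdom : set ('rV[R]_d * 'rV[R]_d) :=
  [set th : 'rV[R]_d * 'rV[R]_d | forall i, th.2 0 i < 0].

Definition logpart (th : 'rV[R]_d * 'rV[R]_d) : R :=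
  - (1/4) * (\sum_(i < d) (th.1 0 i ^+ 2 / th.2 0 i))
  - (1/2) * (\sum_(i < d) ln (- 2 * th.2 0 i)).

(* convex conjugate A^*(omega) = sup_theta <theta,omega> - A(theta)
   (A = +oo outside natdom) *)
Definition Astar (w : 'rV[R]_d * 'rV[R]_d) : \bar R :=
  ereal_sup [set ((pinner th w - logpart th)%:E) | th in natdom].

(* Bregman divergence of A^*: A^*(w') - A^*(w) - <grad A^*(w), w' - w>,
   the linear term being the differential of A^* at w applied to w' - w *)
Definition bregman (w' w : 'rV[R]_d * 'rV[R]_d) : \bar R :=
  (Astar w' - Astar w - ('d (fun v => fine (Astar v)) w (w' - w))%:E)%E.

(* p is proj^{A^*}_C(w), i.e. p is a minimizer of bregman . w over C *)
Definition is_bregman_proj (C : set ('rV[R]_d * 'rV[R]_d))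
    (w p : 'rV[R]_d * 'rV[R]_d) : Prop :=
  C p /\ forall w', C w' -> (bregman p w <= bregman w' w)%E.

Definition expar (mu s2 : 'rV[R]_d) : 'rV[R]_d * 'rV[R]_d :=
  (mu, s2 + hadamard mu mu).

Definition Cnonneg : set ('rV[R]_d * 'rV[R]_d) :=
  [set w | exists mu s2 : 'rV[R]_d,
     (forall i, 0 <= mu 0 i) /\ (forall i, 0 < s2 0 i) /\ w = expar mu s2].

End Gauss.

From HB Require Import structures.
From mathcomp Require Import all_boot all_order all_algebra.
From mathcomp Require Import all_classical all_reals all_analysis.
From mathcomp Require Import ring lra.
Set Implicit Arguments. Unset Strict Implicit. Unset Printing Implicit Defensive.
Import Order.TTheory GRing.Theory Num.Theory.
Import numFieldNormedType.Exports.
Local Open Scope ring_scope.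

(* Coordinatewise Fenchel-Young gives the conjugate in closed form,
   A^*(w) = sum_i -(1 + ln s_i)/2 with s = w_2 - w_1 . w_1 the variance, the
   supremum being attained at the natural parameter (w_1 / s, -1/(2 s)); this
   parameter is therefore also the gradient of A^*.  Hence the Bregman divergence
   of A^* between two expectation parameters is a sum of one-dimensional Gaussian
   KL divergences (s'/s - 1 - ln (s'/s) + (m' - m)^2 / s) / 2.  Over C each term
   is minimised exactly at s' = s, because ln r <= r - 1 with equality only at
   r = 1, and at m' = max(0, m), the point of [0, +oo) nearest to m. *)

Lemma is_diff_linear (R : numFieldType) (V W : normedModType R) (f : V -> W) x :
  linear f -> continuous f -> is_diff x f f.
Proof.
move=> f_linear f_cont.
pose fL : {linear V -> W} := HB.pack f (GRing.isLinear.Build _ _ _ _ _ f_linear).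
apply: DiffDef; first exact: (@linear_differentiable _ _ _ fL).
exact: (@diff_lin _ _ _ fL).
Qed.

Lemma is_diff_sum (R : numFieldType) (V W : normedModType R) (I : Type) (r : seq I)
    (f df : I -> V -> W) x :
  (forall i, is_diff x (f i) (df i)) ->
  is_diff x (\sum_(i <- r) f i) (\sum_(i <- r) df i).
Proof.
move=> f_diff; elim: r => [|i r IHr]; first by rewrite !big_nil; exact: is_diff_cst.
by rewrite !big_cons; apply: is_diffD.
Qed.

Lemma near_eq_is_diff (R : numFieldType) (V W : normedModType R) (f g df : V -> W) x :
  (\forall y \near x, f y = g y) -> is_diff x g df -> is_diff x f df.
Proof.
move=> fg [g_diff <-].
have fgx : f x = g x by apply: nbhs_singleton fg.
have fg0 : \forall h \near (0 : V), f (h + x) = g (h + x).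
  by move/nbhs0P: fg; apply: filterS => h; rewrite addrC.
have /eqaddoP g_expand := diff_locally g_diff.
have f_expand : f \o shift x = cst (f x) + 'd g x +o_ (0 : V) id.
  apply/eqaddoP => e e_gt0; have := g_expand e e_gt0; apply: filter_app.
  by move: fg0; apply: filterS => h fh; rewrite !fctE /= fh fgx.
have dfg : 'd f x = 'd g x :> (V -> W).
  by apply: diff_unique => //; exact: diff_continuous.
apply: DiffDef; last by rewrite dfg.
by apply/diff_locallyP; rewrite dfg; split => //; exact: diff_continuous.
Qed.

Lemma ln_leif_subr1 (R : realType) (x : R) : 0 < x -> ln x <= x - 1 ?= iff (x == 1).
Proof.
move=> x0; have [->|x1] := eqVneq x 1; first by rewrite ln1 subrr; apply/leif_refl.
have lnx_neq0 : ln x != 0.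
  by apply: contra_neq x1 => lnx0; rewrite -[x]lnK ?posrE // lnx0 expR0.
by apply/leifP; have := expR_gt1Dx lnx_neq0; rewrite lnK ?posrE //; lra.
Qed.

Section OneDimensional.
Variable R : realType.

Definition Astar1 (s : R) : R := - (1/2) * (1 + ln s).

Lemma fenchel_young1 (t1 t2 m s : R) : t2 < 0 -> 0 < s ->
  t1 * m + t2 * (s + m ^+ 2) + (1/4) * (t1 ^+ 2 / t2) + (1/2) * ln (- 2 * t2)
  <= Astar1 s.
Proof.
move=> t2_lt0 s_gt0.
have quad_le0 : t1 * m + t2 * m ^+ 2 + (1/4) * (t1 ^+ 2 / t2) <= 0.
  have -> : t1 * m + t2 * m ^+ 2 + (1/4) * (t1 ^+ 2 / t2)
          = (t1 + 2 * t2 * m) ^+ 2 * (4 * t2)^-1 by field; rewrite lt_eqF.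
  by rewrite mulr_ge0_le0 ?sqr_ge0 // invr_le0; lra.
have ln_le : ln (- 2 * t2 * s) <= - 2 * t2 * s - 1.
  by apply: (ln_leif_subr1 _).1; rewrite pmulr_rgt0 //; lra.
rewrite lnM ?posrE // in ln_le; last lra.
rewrite /Astar1; lra.
Qed.

Lemma fenchel_young1_eq (m s : R) : 0 < s ->
  let t1 := m / s in let t2 := - (1/2) / s in
  t1 * m + t2 * (s + m ^+ 2) + (1/4) * (t1 ^+ 2 / t2) + (1/2) * ln (- 2 * t2)
  = Astar1 s.
Proof.
move=> s_gt0 t1 t2; have -> : - 2 * t2 = s^-1 by rewrite /t2; field; rewrite gt_eqF.
by rewrite lnV ?posrE // /t1 /t2 /Astar1; field; rewrite gt_eqF.
Qed.

Lemma is_diff_Astar1 (s : R) : 0 < s -> is_diff s Astar1 ( *%R^~ (- (1/2) / s)).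
Proof.
move=> s_gt0; have [ln_derivable ln'] := is_derive1_ln s_gt0.
have ln_diff : differentiable (@ln R) s by apply/derivable1_diffP.
have ln_is_diff : is_diff s (@ln R) ( *%R^~ s^-1).
  apply: DiffDef => //; rewrite diff1E //; apply/funext => t.
  by rewrite derive1E ln'.
have -> : Astar1 = cst (- (1/2)) + (- (1/2)) *: (@ln R).
  by apply/funext => t; rewrite /Astar1 /= mulrDr mulr1.
apply: is_diff_eq
  (is_diffD (@is_diff_cst R _ R (- (1/2)) s) (is_diffZ (- (1/2)) ln_is_diff)) _.
by apply/funext => t; rewrite /= add0r mulrCA.
Qed.

(* KL(N(m', s') || N(m, s)) *)
Definition kl1 (m' s' m s : R) : R :=
  (1/2) * (s' / s - 1 - ln (s' / s) + (m' - m) ^+ 2 / s).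

Lemma sqr_dist_max0_leif (m' m : R) : 0 <= m' ->
  (Num.max 0 m - m) ^+ 2 <= (m' - m) ^+ 2 ?= iff (m' == Num.max 0 m).
Proof.
move=> m'_ge0; case: (leP 0 m) => [m_ge0|m_lt0].
  rewrite subrr expr0n /=; apply/leifP.
  case: eqVneq => [->|m'_neq_m]; first by rewrite subrr expr0n.
  by rewrite lt_neqAle sqr_ge0 andbT eq_sym sqrf_eq0 subr_eq0.
have [->|m'_neq0] := eqVneq m' 0; first exact/leif_refl.
apply/leifP; rewrite sub0r sqrrN.
have : 0 < m' by rewrite lt_neqAle eq_sym m'_neq0.
nra.
Qed.

Lemma kl1_leif (m' s' m s : R) : 0 <= m' -> 0 < s' -> 0 < s ->
  kl1 (Num.max 0 m) s m s <= kl1 m' s' m s ?= iff (s' == s) && (m' == Num.max 0 m).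
Proof.
move=> m'_ge0 s'_gt0 s_gt0.
have var_leif : 0 <= s' / s - 1 - ln (s' / s) ?= iff (s' == s).
  have -> : (s' == s) = (s' / s == 1).
    by rewrite -[1 in RHS](divr1 1) eqr_div ?oner_eq0 ?(gt_eqF s_gt0) // mulr1 mul1r.
  by rewrite leifBRL add0r; apply: ln_leif_subr1; rewrite divr_gt0.
have mean_leif := sqr_dist_max0_leif m m'_ge0.
have s_inv_gt0 : 0 < s^-1 by rewrite invr_gt0.
rewrite -(mono_leif (ler_pM2r s_inv_gt0)) in mean_leif.
have := leifD var_leif mean_leif.
rewrite -(mono_leif (ler_pM2l (_ : 0 < 1/2))) //.
by rewrite /kl1 divff ?(gt_eqF s_gt0) // ln1 !subrr add0r.
Qed.

End OneDimensional.

Section GaussianConjugate.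
Variables (R : realType) (d : nat).
Local Notation par := ('rV[R]_d * 'rV[R]_d)%type.

Definition variance (w : par) (i : 'I_d) : R := w.2 0 i - w.1 0 i ^+ 2.

Definition Astar_closed (w : par) : R := \sum_(i < d) Astar1 (variance w i).

Definition natpar (w : par) : par :=
  (\row_i (w.1 0 i / variance w i), \row_i (- (1/2) / variance w i)).

Lemma variance_expar (m s : 'rV[R]_d) i : variance (expar m s) i = s 0 i.
Proof. by rewrite /variance /expar /hadamard /= !mxE addrK. Qed.

Lemma pinner_sub_logpart (th w : par) :
  pinner th w - logpart th = \sum_(i < d)
    (th.1 0 i * w.1 0 i + th.2 0 i * w.2 0 i + (1/4) * (th.1 0 i ^+ 2 / th.2 0 i)
     + (1/2) * ln (- 2 * th.2 0 i)).
Proof. by rewrite /pinner /logpart !big_split /= -!mulr_sumr; lra. Qed.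

Lemma AstarE (w : par) : (forall i, 0 < variance w i) -> Astar w = (Astar_closed w)%:E.
Proof.
move=> var_gt0; have w2E i : w.2 0 i = variance w i + w.1 0 i ^+ 2 by rewrite subrK.
apply/eqP; rewrite eq_le; apply/andP; split.
  apply: ge_ereal_sup => _ [th th_dom <-]; rewrite lee_fin pinner_sub_logpart.
  by apply: ler_sum => i _; rewrite w2E; apply: fenchel_young1.
apply: ereal_sup_ubound; exists (natpar w).
  by move=> i; rewrite mxE mulNr oppr_lt0 divr_gt0.
rewrite pinner_sub_logpart; congr (_%:E); apply: eq_bigr => i _.
by rewrite !mxE w2E fenchel_young1_eq.
Qed.

Lemma is_diff_variance i (w : par) :
  is_diff w (variance ^~ i) (fun h => h.2 0 i - 2 * w.1 0 i * h.1 0 i).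
Proof.
have cont1 : continuous (fun v : par => v.1 0 i).
  move=> v; apply: (@continuous_comp _ _ _ fst (fun M : 'rV[R]_d => M 0 i)).
    exact: cvg_fst.
  exact: coord_continuous.
have cont2 : continuous (fun v : par => v.2 0 i).
  move=> v; apply: (@continuous_comp _ _ _ snd (fun M : 'rV[R]_d => M 0 i)).
    exact: cvg_snd.
  exact: coord_continuous.
have diff1 : is_diff w (fun v : par => v.1 0 i) (fun v : par => v.1 0 i).
  apply: is_diff_linear; last exact: cont1.
  by move=> a u v; rewrite !mxE.
have diff2 : is_diff w (fun v : par => v.2 0 i) (fun v : par => v.2 0 i).
  apply: is_diff_linear; last exact: cont2.
  by move=> a u v; rewrite !mxE.
have -> : variance ^~ i =
    (fun v : par => v.2 0 i) - (fun v : par => v.1 0 i) * (fun v : par => v.1 0 i).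
  by apply/funext => v; rewrite /variance /= expr2.
apply: is_diff_eq (is_diffB diff2 (is_diffM diff1 diff1)) _.
apply/funext => h; rewrite !fctE /=.
change (w.1 0 i *: h.1 0 i) with (w.1 0 i * h.1 0 i); ring.
Qed.

Lemma is_diff_Astar_closed (w : par) : (forall i, 0 < variance w i) ->
  is_diff w Astar_closed (pinner (natpar w)).
Proof.
move=> var_gt0.
have -> : Astar_closed = \sum_(i < d) (@Astar1 R \o variance ^~ i).
  by apply/funext => v; rewrite fct_sumE.
have Astar1_variance_diff i :=
  is_diff_comp (is_diff_variance i w) (is_diff_Astar1 (var_gt0 i)).
apply: is_diff_eq (is_diff_sum _ Astar1_variance_diff) _.
apply/funext => h; rewrite fct_sumE /pinner; apply: eq_bigr => i _ /=.
by rewrite !mxE; field; rewrite gt_eqF.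
Qed.

Lemma is_diff_Astar (w : par) : (forall i, 0 < variance w i) ->
  is_diff w (fun v => fine (Astar v)) (pinner (natpar w)).
Proof.
move=> var_gt0; apply: near_eq_is_diff (is_diff_Astar_closed var_gt0).
have near_var_gt0 i : \forall v \near w, 0 < variance v i.
  have var_cont : {for w, continuous (variance ^~ i)}.
    apply: differentiable_continuous.
    exact: (@ex_diff _ _ _ _ _ _ _ (is_diff_variance i w)).
  exact: cvgr_gt _ var_cont _ (var_gt0 i).
have : \forall v \near w, forall i, 0 < variance v i.
  exact: (@filter_forall _ _ (fun i v => 0 < variance v i) _ _ near_var_gt0).
by apply: filterS => v var_v_gt0; rewrite AstarE.
Qed.

Lemma bregman_expar (m' s' m s : 'rV[R]_d) :
  (forall i, 0 < s' 0 i) -> (forall i, 0 < s 0 i) ->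
  bregman (expar m' s') (expar m s) =
  (\sum_(i < d) kl1 (m' 0 i) (s' 0 i) (m 0 i) (s 0 i))%:E.
Proof.
move=> s'_gt0 s_gt0.
have var'_gt0 i : 0 < variance (expar m' s') i by rewrite variance_expar.
have var_gt0 i : 0 < variance (expar m s) i by rewrite variance_expar.
rewrite /bregman (AstarE var'_gt0) (AstarE var_gt0).
rewrite (@diff_val _ _ _ _ _ _ _ (is_diff_Astar var_gt0)).
rewrite -!EFinB /Astar_closed /pinner -!sumrB; congr (_%:E); apply: eq_bigr => i _.
rewrite /natpar /expar /hadamard /= !mxE !variance_expar.
have := s_gt0 i; have := s'_gt0 i => s'i_gt0 si_gt0.
rewrite /kl1 /Astar1 lnM ?posrE ?invr_gt0 // lnV ?posrE //.
by field; rewrite gt_eqF.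
Qed.

End GaussianConjugate.

Unset Implicit Arguments.

Theorem proposition15 (R : realType) (d : nat) (mu s2 : 'rV[R]_d) :
  (forall i, 0 < s2 0 i) ->
  forall p : 'rV[R]_d * 'rV[R]_d,
    is_bregman_proj (@Cnonneg R d) (expar mu s2) p <->
    p = expar (\row_i Num.max 0 (mu 0 i)) s2.
Proof.
move=> s2_gt0 p; set mP := \row_i Num.max 0 (mu 0 i).
have mP_in_C : Cnonneg (expar mP s2).
  by exists mP, s2; split=> // i; rewrite mxE le_max lexx.
have kl_sum_leif (m' s' : 'rV[R]_d) :
    (forall i, 0 <= m' 0 i) -> (forall i, 0 < s' 0 i) ->
  \sum_(i < d) kl1 (mP 0 i) (s2 0 i) (mu 0 i) (s2 0 i)
  <= \sum_(i < d) kl1 (m' 0 i) (s' 0 i) (mu 0 i) (s2 0 i)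
  ?= iff [forall i, (s' 0 i == s2 0 i) && (m' 0 i == mP 0 i)].
  by move=> m'_ge0 s'_gt0; apply: leif_sum => i _; rewrite !mxE; apply: kl1_leif.
split=> [[[m' [s' [m'_ge0 [s'_gt0 ->]]]] p_min] | ->].
  have := p_min _ mP_in_C; rewrite !bregman_expar // lee_fin => kl_le.
  have kl_leif := kl_sum_leif m' s' m'_ge0 s'_gt0.
  have /forallP eq_coord : [forall i, (s' 0 i == s2 0 i) && (m' 0 i == mP 0 i)].
    by rewrite -(eq_leif kl_leif) eq_le kl_le kl_leif.1.
  by congr expar; apply/rowP => i; have /andP[/eqP ? /eqP ?] := eq_coord i.
split=> // _ [m' [s' [m'_ge0 [s'_gt0 ->]]]].
by rewrite !bregman_expar // lee_fin; apply: (kl_sum_leif m' s' m'_ge0 s'_gt0).1.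
Qed.
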